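(* Let $\tfrac12<\sigma<1$. Then, as $n\to\infty$, $$\frac{1}{n^{2(1-\sigma)}}\int_0^1\Big|\sum_{k=1}^n\frac{1}{k^{\sigma+it}}\Big|^2dt=\frac{1}{1-\sigma}\arctan\Big(\frac{1}{1-\sigma}\Big)+O_\sigma\Big(\frac{1}{n^{2(1-\sigma)/3}}\Big).$$ *)

From Stdlib Require Import Reals.
From Coquelicot Require Import Coquelicot.
Open Scope R_scope.

(* Complex power k^{-s} := exp(-s * ln k) for a positive integer k and s in C,
   written out: exp(-(a+ib) ln k) = k^{-a} (cos(b ln k) - i sin(b ln k)). *)
Definition nat_cpow_neg (k : nat) (s : C) : C :=
  let L := ln (INR k) in
  (exp (- Re s * L) * cos (Im s * L), - (exp (- Re s * L) * sin (Im s * L))).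

Fixpoint dirichlet_sum (n : nat) (s : C) : C :=
  match n with
  | O => 0%C
  | S m => Cplus (dirichlet_sum m s) (nat_cpow_neg (S m) s)
  end.

From Stdlib Require Import Reals Lra Psatz.
From Coquelicot Require Import Coquelicot.
Open Scope R_scope.

(* Write s = sigma + i t and a = 1 - sigma.  Comparing S_n(s) = sum_(k <= n) k^-s with the
   integral of y^-s, the step from k to k + 1 costs
   (1 - s) (k + 1)^-s - ((k + 1)^(1-s) - k^(1-s)) = O((k + 1)^(-sigma-1)) uniformly for
   0 <= t <= 1, which is O(k^-sigma - (k + 1)^-sigma); these telescope, so
   (1 - s) S_n(s) = n^(1-s) + O(1).  Taking squared moduli,
   |S_n(s)|^2 / n^(2a) = 1 / (a^2 + t^2) + O(n^-a), and 1 / (a^2 + t^2) integrates over [0, 1]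
   to atan(1 / a) / a.  The error O(n^-a) is better than the one claimed, and only
   0 < sigma < 1 is used. *)

Lemma sin_ge_cubic y : 0 <= y <= 4 -> y - y ^ 3 / 6 <= sin y.
Proof.
  intros Hy. destruct (pre_sin_bound y 0 (proj1 Hy) (proj2 Hy)) as [H _].
  unfold sin_approx, sin_term in H. simpl in H. unfold INR in H. simpl in H. lra.
Qed.

Lemma cos_ge_quadratic y : -2 <= y <= 2 -> 1 - y ^ 2 / 2 <= cos y.
Proof.
  intros Hy. destruct (pre_cos_bound y 0 (proj1 Hy) (proj2 Hy)) as [H _].
  unfold cos_approx, cos_term in H. simpl in H. unfold INR in H. simpl in H. lra.
Qed.

Lemma exp_neg_le_quadratic w : 0 <= w -> exp (- w) <= 1 - w + w ^ 2.
Proof.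
  intros Hw.
  assert (Hinv : exp (- w) * exp w = 1)
    by (rewrite <- exp_plus, Rplus_opp_l; apply exp_0).
  pose proof (exp_ineq1_le w). pose proof (exp_pos (- w)).
  (* (1 - w + w^2) (1 + w) = 1 + w^3 >= exp (- w) exp w >= exp (- w) (1 + w) *)
  assert (exp (- w) * (1 + w) <= (1 - w + w ^ 2) * (1 + w)) by nra.
  nra.
Qed.

Lemma ln_le_sub1 y : 0 < y -> ln y <= y - 1.
Proof. intros Hy. pose proof (exp_ineq1_le (ln y)) as Hexp. rewrite exp_ln in Hexp; lra. Qed.

Lemma ln_succ_sub_bounds x : 0 < x -> / (x + 1) <= ln (x + 1) - ln x <= / x.
Proof.
  intros Hx. split.
  - assert (H : ln (x / (x + 1)) <= x / (x + 1) - 1)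
      by (apply ln_le_sub1, Rdiv_lt_0_compat; lra).
    rewrite ln_div in H by lra.
    replace (x / (x + 1) - 1) with (- / (x + 1)) in H by (field; lra). lra.
  - assert (H : ln ((x + 1) / x) <= (x + 1) / x - 1)
      by (apply ln_le_sub1, Rdiv_lt_0_compat; lra).
    rewrite ln_div in H by lra.
    replace ((x + 1) / x - 1) with (/ x) in H by (field; lra). lra.
Qed.

Lemma exp_cis_linearization_bounds a t m u :
  0 <= a <= 1 -> 0 <= t <= 1 -> 0 <= m <= 1 / 2 -> m <= u <= m + 2 * m ^ 2 ->
  Rabs (a * m - 1 + exp (- (a * u)) * cos (t * u)) <= 8 * m ^ 2 /\
  Rabs (- (t * m) + exp (- (a * u)) * sin (t * u)) <= 8 * m ^ 2.
Proof.
  intros Ha Ht Hm Hu.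
  assert (Hu2 : u <= 2 * m) by nra.
  set (w := a * u). set (v := t * u).
  assert (Hw : 0 <= w <= u) by (unfold w; nra).
  assert (Hv : 0 <= v <= u) by (unfold v; nra).
  set (E := exp (- w)).
  assert (HE : 1 - w <= E <= 1 - w + w ^ 2)
    by (split; [pose proof (exp_ineq1_le (- w)); unfold E; lra | apply exp_neg_le_quadratic; lra]).
  assert (HE1 : E <= 1) by nra.
  assert (Hco : 1 - v ^ 2 / 2 <= cos v <= 1)
    by (split; [apply cos_ge_quadratic | apply COS_bound]; lra).
  assert (Hsi : v - v ^ 3 / 6 <= sin v <= v).
  { split; [apply sin_ge_cubic; lra |].
    destruct (Req_dec v 0) as [->|]; [rewrite sin_0; lra | left; apply sin_lt_x; lra]. }
  assert (HE0 : 0 <= E) by (unfold E; left; apply exp_pos).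
  assert (Huu : u ^ 2 <= 4 * m ^ 2) by nra.
  assert (Hw2 : w ^ 2 <= u ^ 2) by nra.
  assert (Hv2 : v ^ 2 <= u ^ 2) by nra.
  assert (Hv3 : v ^ 3 <= v ^ 2) by nra.
  assert (Hau : 0 <= a * (u - m) <= 2 * m ^ 2) by nra.
  assert (Htu : 0 <= t * (u - m) <= 2 * m ^ 2) by nra.
  assert (Hcos : - (v ^ 2 / 2) <= E * (cos v - 1) <= 0) by nra.
  assert (Hsin0 : 0 <= sin v) by nra.
  assert (Hsin : 0 <= (1 - E) * sin v <= w * v)
    by (split; [apply Rmult_le_pos | apply Rmult_le_compat]; lra).
  assert (Hwv : w * v <= u ^ 2) by nra.
  replace (a * m - 1 + E * cos v) with ((E - 1 + w) + E * (cos v - 1) - a * (u - m))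
    by (unfold w; ring).
  replace (- (t * m) + E * sin v) with (- ((1 - E) * sin v) + (sin v - v) + t * (u - m))
    by (unfold v; ring).
  split; apply Rabs_le; split; lra.
Qed.

Lemma Rpower_neg_succ_le x sigma : 0 < x -> 0 < sigma ->
  Rpower (x + 1) (- sigma) / (x + 1) <= / sigma * (Rpower x (- sigma) - Rpower (x + 1) (- sigma)).
Proof.
  intros Hx Hs.
  destruct (ln_succ_sub_bounds x Hx) as [Hu _].
  set (p := Rpower (x + 1) (- sigma)).
  assert (Hp : 0 < p) by apply exp_pos.
  assert (Hpx : Rpower x (- sigma) = p * exp (sigma * (ln (x + 1) - ln x))).
  { unfold p, Rpower. rewrite <- exp_plus. f_equal. ring. }
  pose proof (exp_ineq1_le (sigma * (ln (x + 1) - ln x))).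
  assert (sigma * / (x + 1) <= sigma * (ln (x + 1) - ln x)) by (apply Rmult_le_compat_l; lra).
  rewrite Hpx.
  apply (Rmult_le_reg_l sigma); [lra |].
  replace (sigma * (/ sigma * (p * exp (sigma * (ln (x + 1) - ln x)) - p)))
    with (p * (exp (sigma * (ln (x + 1) - ln x)) - 1)) by (field; lra).
  replace (sigma * (p / (x + 1))) with (p * (sigma * / (x + 1))) by (field; lra).
  apply Rmult_le_compat_l; lra.
Qed.

Definition cpow (x : R) (s : C) : C :=
  (Rpower x (Re s) * cos (Im s * ln x), Rpower x (Re s) * sin (Im s * ln x)).

Lemma nat_cpow_neg_cpow k s : nat_cpow_neg k s = cpow (INR k) (- s).
Proof.
  unfold nat_cpow_neg, cpow, Rpower; simpl.
  rewrite !Ropp_mult_distr_l_reverse, cos_neg, sin_neg.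
  unfold Re, Im. f_equal; ring.
Qed.

Lemma cpow_add x s1 s2 : cpow x (s1 + s2) = (cpow x s1 * cpow x s2)%C.
Proof.
  unfold cpow, Cmult, Re, Im; simpl. rewrite Rpower_plus, !Rmult_plus_distr_r, cos_plus, sin_plus.
  f_equal; ring.
Qed.

Lemma cpow_mult_l x y s : 0 < x -> 0 < y -> cpow (x * y) s = (cpow x s * cpow y s)%C.
Proof.
  intros Hx Hy. unfold cpow, Cmult, Re, Im; simpl.
  rewrite <- Rpower_mult_distr, ln_mult, Rmult_plus_distr_l, cos_plus, sin_plus by assumption.
  f_equal; ring.
Qed.

Lemma cpow_RtoC x r : cpow x (RtoC r) = RtoC (Rpower x r).
Proof. unfold cpow, RtoC, Re, Im; simpl. rewrite Rmult_0_l, cos_0, sin_0. f_equal; ring. Qed.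

Lemma cpow_1_l s : cpow 1 s = 1%C.
Proof.
  unfold cpow, Rpower. rewrite ln_1, !Rmult_0_r, exp_0, cos_0, sin_0.
  unfold RtoC. f_equal; ring.
Qed.

Lemma Cmod_cpow x s : Cmod (cpow x s) = Rpower x (Re s).
Proof.
  unfold Cmod, cpow. cbn [fst snd].
  replace ((Rpower x (Re s) * cos (Im s * ln x)) ^ 2 + (Rpower x (Re s) * sin (Im s * ln x)) ^ 2)
    with (Rpower x (Re s) ^ 2 * ((sin (Im s * ln x))² + (cos (Im s * ln x))²))
    by (unfold Rsqr; ring).
  rewrite sin2_cos2, Rmult_1_r.
  apply sqrt_pow2. left; apply exp_pos.
Qed.

Lemma Cmod_le_Rabs_add z : Cmod z <= Rabs (Re z) + Rabs (Im z).
Proof.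
  unfold Cmod. rewrite <- (sqrt_pow2 (Rabs (Re z) + Rabs (Im z))) by
    (apply Rplus_le_le_0_compat; apply Rabs_pos).
  apply sqrt_le_1_alt. rewrite <- (pow2_abs (fst z)), <- (pow2_abs (snd z)).
  pose proof (Rabs_pos (Re z)). pose proof (Rabs_pos (Im z)). unfold Re, Im in *. nra.
Qed.

Lemma cpow_succ_increment_factor x s : 0 < x ->
  ((1 - s) * cpow (x + 1) (- s) - (cpow (x + 1) (1 - s) - cpow x (1 - s)))%C
  = (cpow (x + 1) (1 - s) * ((1 - s) * RtoC (/ (x + 1)) - 1 + cpow (x / (x + 1)) (1 - s)))%C.
Proof.
  intros Hx.
  assert (Hpow_y : cpow (x + 1) (- s) = (cpow (x + 1) (1 - s) * RtoC (/ (x + 1)))%C).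
  { replace (RtoC (/ (x + 1))) with (cpow (x + 1) (RtoC (Ropp 1)))
      by (rewrite cpow_RtoC, Rpower_Ropp, Rpower_1 by lra; easy).
    rewrite <- cpow_add. f_equal. apply injective_projections; simpl; ring. }
  assert (Hpow_x : cpow x (1 - s) = (cpow (x + 1) (1 - s) * cpow (x / (x + 1)) (1 - s))%C).
  { rewrite <- cpow_mult_l by (try apply Rdiv_lt_0_compat; lra). f_equal. field. lra. }
  rewrite Hpow_y, Hpow_x. ring.
Qed.

(* The bracket is the error of the first-order expansion of
   [(x / (x + 1)) ^ (1 - s) = exp (- (1 - s) u)], [u = ln (1 + 1 / x)]. *)
Lemma Cmod_cpow_ratio_first_order x s : 1 <= x -> 0 <= Re s <= 1 -> 0 <= Im s <= 1 ->
  Cmod ((1 - s) * RtoC (/ (x + 1)) - 1 + cpow (x / (x + 1)) (1 - s))%C <= 16 * (/ (x + 1)) ^ 2.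
Proof.
  intros Hx Hre Him.
  set (m := / (x + 1)). set (u := ln (x + 1) - ln x).
  assert (Hm : 0 <= m <= 1 / 2).
  { unfold m. split; [left; apply Rinv_0_lt_compat; lra |].
    apply (Rmult_le_reg_l (x + 1)); [lra |]. rewrite Rinv_r by lra. lra. }
  assert (Hu : m <= u <= m + 2 * m ^ 2).
  { destruct (ln_succ_sub_bounds x ltac:(lra)) as [H1 H2]. split; [exact H1 |].
    apply (Rle_trans _ (/ x)); [exact H2 |].
    unfold m. apply (Rmult_le_reg_l (x * (x + 1) ^ 2)); [nra |].
    field_simplify; [nra | lra | lra]. }
  assert (Hln : ln (x / (x + 1)) = - u) by (unfold u; rewrite ln_div; lra).
  destruct (exp_cis_linearization_bounds (1 - Re s) (Im s) m u ltac:(lra) Him Hm Hu)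
    as [Hre' Him'].
  eapply Rle_trans; [apply Cmod_le_Rabs_add |].
  unfold cpow, Rpower, Re, Im in *. rewrite Hln. simpl.
  replace ((0 + - snd s) * - u) with (snd s * u) by ring.
  replace ((1 + - fst s) * - u) with (- ((1 - fst s) * u)) by ring.
  match goal with |- Rabs ?re + Rabs ?im <= _ =>
    replace re with ((1 - fst s) * m - 1 + exp (- ((1 - fst s) * u)) * cos (snd s * u)) by ring;
    replace im with (- (snd s * m) + exp (- ((1 - fst s) * u)) * sin (snd s * u)) by ring
  end.
  lra.
Qed.

Lemma cpow_increment_error x s : 1 <= x -> 0 < Re s <= 1 -> 0 <= Im s <= 1 ->
  Cmod ((1 - s) * cpow (x + 1) (- s) - (cpow (x + 1) (1 - s) - cpow x (1 - s)))%C
  <= 16 / Re s * (Rpower x (- Re s) - Rpower (x + 1) (- Re s)).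
Proof.
  intros Hx Hre Him.
  rewrite cpow_succ_increment_factor, Cmod_mult, Cmod_cpow by lra.
  pose proof (Cmod_cpow_ratio_first_order x s Hx ltac:(lra) Him) as Hbracket.
  pose proof (Rpower_neg_succ_le x (Re s) ltac:(lra) (proj1 Hre)) as Htel.
  set (y := x + 1) in *. set (sigma := Re s) in *.
  assert (Hy : 0 < y) by (unfold y; lra).
  replace (Rpower y (Re (1 - s))) with (Rpower y (- sigma) * y)
    by (rewrite <- (Rpower_1 y Hy) at 2; rewrite <- Rpower_plus;
        f_equal; simpl; unfold sigma, Re; ring).
  assert (Hp : 0 < Rpower y (- sigma)) by apply exp_pos.
  apply (Rle_trans _ (Rpower y (- sigma) * y * (16 * (/ y) ^ 2))).
  { apply Rmult_le_compat_l; [apply Rmult_le_pos; lra | exact Hbracket]. }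
  replace (Rpower y (- sigma) * y * (16 * (/ y) ^ 2)) with (16 * (Rpower y (- sigma) / y))
    by (field; lra).
  unfold Rdiv at 2. rewrite Rmult_assoc.
  apply Rmult_le_compat_l; lra.
Qed.

Lemma dirichlet_sum_succ n s :
  dirichlet_sum (S n) s = (dirichlet_sum n s + cpow (INR n + 1) (- s))%C.
Proof. cbn [dirichlet_sum]. rewrite nat_cpow_neg_cpow, S_INR. reflexivity. Qed.

Lemma dirichlet_sum_1 s : dirichlet_sum 1 s = 1%C.
Proof. rewrite dirichlet_sum_succ. simpl. rewrite Rplus_0_l, cpow_1_l. ring. Qed.

Lemma dirichlet_sum_remainder n s : (1 <= n)%nat -> 0 < Re s <= 1 -> 0 <= Im s <= 1 ->
  Cmod ((1 - s) * dirichlet_sum n s - cpow (INR n) (1 - s))%C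
  <= Cmod s + 16 / Re s * (1 - Rpower (INR n) (- Re s)).
Proof.
  intros Hn Hre Him.
  induction n as [|n IH]; [lia |].
  destruct n as [|n].
  - rewrite dirichlet_sum_1, INR_1, cpow_1_l.
    replace ((1 - s) * 1 - 1)%C with (- s)%C by ring.
    unfold Rpower. rewrite ln_1, Rmult_0_r, exp_0, Cmod_opp. lra.
  - specialize (IH ltac:(lia)).
    rewrite dirichlet_sum_succ, (S_INR (S n)).
    set (x := INR (S n)) in *.
    assert (Hx : 1 <= x) by (unfold x; rewrite S_INR; pose proof (pos_INR n); lra).
    pose proof (cpow_increment_error x s Hx Hre Him) as Hstep.
    replace ((1 - s) * (dirichlet_sum (S n) s + cpow (x + 1) (- s)) - cpow (x + 1) (1 - s))%C
      with (((1 - s) * dirichlet_sum (S n) s - cpow x (1 - s))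
            + ((1 - s) * cpow (x + 1) (- s) - (cpow (x + 1) (1 - s) - cpow x (1 - s))))%C
      by ring.
    eapply Rle_trans; [apply Cmod_triangle |].
    replace (Cmod s + 16 / Re s * (1 - Rpower (x + 1) (- Re s)))
      with (Cmod s + 16 / Re s * (1 - Rpower x (- Re s))
            + 16 / Re s * (Rpower x (- Re s) - Rpower (x + 1) (- Re s))) by ring.
    lra.
Qed.

Lemma Cmod_sqr_add_sub z r : Rabs (Cmod (z + r) ^ 2 - Cmod z ^ 2) <= Cmod r * (2 * Cmod z + Cmod r).
Proof.
  pose proof (Cmod_triangle z r) as H1.
  pose proof (Cmod_triangle (z + r) (- r)) as H2.
  replace (z + r + - r)%C with z in H2 by ring. rewrite Cmod_opp in H2.
  pose proof (Cmod_ge_0 z). pose proof (Cmod_ge_0 r). pose proof (Cmod_ge_0 (z + r)).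
  apply Rabs_le. split; nra.
Qed.

Lemma Cmod_sqr_ratio_estimate (w S z r : C) (K : R) :
  (w * S = z + r)%C -> 0 < Cmod w -> 1 <= Cmod z -> Cmod r <= K ->
  Rabs (Cmod S ^ 2 / Cmod z ^ 2 - / Cmod w ^ 2) <= K * (2 + K) / (Cmod w ^ 2 * Cmod z).
Proof.
  intros HwS Hw Hz Hr.
  set (W := Cmod w) in *. set (q := Cmod z) in *.
  pose proof (Cmod_ge_0 r).
  assert (Hnum : Rabs (W ^ 2 * Cmod S ^ 2 - q ^ 2) <= K * (2 + K) * q).
  { replace (W ^ 2 * Cmod S ^ 2) with (Cmod (z + r) ^ 2)
      by (rewrite <- HwS, Cmod_mult; unfold W; ring).
    eapply Rle_trans; [apply Cmod_sqr_add_sub |]. fold q.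
    apply (Rle_trans _ (K * (2 * q + K))).
    { apply Rmult_le_compat; lra. }
    assert (0 <= K * K * (q - 1)) by (apply Rmult_le_pos; nra).
    replace (K * (2 + K) * q) with (K * (2 * q + K) + K * K * (q - 1)) by ring. lra. }
  replace (Cmod S ^ 2 / q ^ 2 - / W ^ 2) with ((W ^ 2 * Cmod S ^ 2 - q ^ 2) / (W ^ 2 * q ^ 2))
    by (field; lra).
  unfold Rdiv. rewrite Rabs_mult, Rabs_inv, (Rabs_right (W ^ 2 * q ^ 2)) by (apply Rle_ge; nra).
  replace (K * (2 + K) * / (W ^ 2 * q)) with (K * (2 + K) * q * / (W ^ 2 * q ^ 2)) by (field; lra).
  apply Rmult_le_compat_r; [| exact Hnum].
  left; apply Rinv_0_lt_compat, Rmult_lt_0_compat; apply pow_lt; lra.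
Qed.

Lemma dirichlet_sum_remainder_uniform n sigma t :
  (1 <= n)%nat -> 0 < sigma <= 1 -> 0 <= t <= 1 ->
  Cmod ((1 - (sigma, t)) * dirichlet_sum n (sigma, t) - cpow (INR n) (1 - (sigma, t)))%C
  <= 2 + 16 / sigma.
Proof.
  intros Hn Hs Ht.
  eapply Rle_trans; [apply dirichlet_sum_remainder; simpl; easy |]. simpl Re.
  assert (Cmod (sigma, t) <= 2).
  { eapply Rle_trans; [apply Cmod_le_Rabs_add |]. simpl. rewrite !Rabs_right; lra. }
  assert (0 < Rpower (INR n) (- sigma)) by apply exp_pos.
  assert (0 < 16 / sigma) by (apply Rdiv_lt_0_compat; lra).
  nra.
Qed.

Lemma dirichlet_sum_sqr_pointwise n sigma t : (1 <= n)%nat -> 0 < sigma < 1 -> 0 <= t <= 1 ->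
  Rabs (Cmod (dirichlet_sum n (sigma, t)) ^ 2 / Rpower (INR n) (2 * (1 - sigma))
        - / ((1 - sigma) ^ 2 + t ^ 2))
  <= (2 + 16 / sigma) * (4 + 16 / sigma) / ((1 - sigma) ^ 2 * Rpower (INR n) (1 - sigma)).
Proof.
  intros Hn Hs Ht.
  set (s := (sigma, t)).
  set (z := cpow (INR n) (1 - s)).
  set (r := ((1 - s) * dirichlet_sum n s - z)%C).
  assert (HwS : ((1 - s) * dirichlet_sum n s = z + r)%C) by (unfold r; ring).
  assert (Hw0 : 0 < Cmod (1 - s)).
  { apply (Rlt_le_trans _ (Rabs (Re (1 - s)))); [| apply re_le_Cmod].
    simpl. rewrite Rabs_right; lra. }
  assert (Hz : Cmod z = Rpower (INR n) (1 - sigma))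
    by (unfold z; rewrite Cmod_cpow; simpl; f_equal; ring).
  assert (Hq : 1 <= Cmod z).
  { pose proof (Rle_Rpower (INR n) 0 (1 - sigma) ltac:(apply (le_INR 1); lia) ltac:(lra)) as Hmono.
    rewrite Rpower_O in Hmono by (apply (lt_INR 0); lia). rewrite Hz. exact Hmono. }
  pose proof (Cmod_sqr_ratio_estimate _ _ _ _ _ HwS Hw0 Hq
                (dirichlet_sum_remainder_uniform n sigma t Hn ltac:(lra) Ht)) as Hest.
  rewrite Hz in Hq, Hest.
  replace (Cmod (1 - s) ^ 2) with ((1 - sigma) ^ 2 + t ^ 2) in Hest
    by (rewrite Cmod2_alt; simpl; ring).
  replace (Rpower (INR n) (2 * (1 - sigma))) with (Rpower (INR n) (1 - sigma) ^ 2)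
    by (rewrite <- Rpower_pow, Rpower_mult by apply exp_pos; simpl; f_equal; ring).
  eapply Rle_trans; [exact Hest |].
  replace (2 + (2 + 16 / sigma)) with (4 + 16 / sigma) by ring.
  assert (0 < 16 / sigma) by (apply Rdiv_lt_0_compat; lra).
  unfold Rdiv. apply Rmult_le_compat_l; [nra |].
  apply Rinv_le_contravar; [apply Rmult_lt_0_compat; [apply pow_lt |]; lra |].
  apply Rmult_le_compat_r; nra.
Qed.

Lemma ex_derive_dirichlet_sum sigma n t :
  ex_derive (fun t => Re (dirichlet_sum n (sigma, t))) t /\
  ex_derive (fun t => Im (dirichlet_sum n (sigma, t))) t.
Proof.
  induction n as [|n IH]; cbn [dirichlet_sum].
  - split; apply ex_derive_const.
  - destruct IH as [IHre IHim]. unfold nat_cpow_neg, Cplus, Re, Im in *. cbn [fst snd].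
    split; apply (ex_derive_plus (V := R_NormedModule)); try assumption; auto_derive; auto.
Qed.

Lemma continuous_Cmod_dirichlet_sum_sqr sigma n t :
  continuous (fun t => Cmod (dirichlet_sum n (sigma, t)) ^ 2) t.
Proof.
  destruct (ex_derive_dirichlet_sum sigma n t) as [Hre Him].
  apply (continuous_ext
    (fun t => Re (dirichlet_sum n (sigma, t)) ^ 2 + Im (dirichlet_sum n (sigma, t)) ^ 2)).
  { intros; symmetry; apply Cmod2_alt. }
  apply (ex_derive_continuous (K := R_AbsRing) (V := R_NormedModule)).
  apply (ex_derive_plus (V := R_NormedModule)); apply ex_derive_pow; assumption.
Qed.

Lemma is_RInt_inv_sqr_add a u v : 0 < a ->
  is_RInt (fun t => / (a ^ 2 + t ^ 2)) u v (/ a * (atan (v / a) - atan (u / a))).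
Proof.
  intros Ha.
  replace (/ a * (atan (v / a) - atan (u / a)))
    with (minus (/ a * atan (v / a)) (/ a * atan (u / a)))
    by (unfold minus, plus, opp; simpl; ring).
  apply (is_RInt_derive (fun t => / a * atan (t / a))).
  - intros x _. auto_derive; [trivial |].
    assert (0 < a ^ 2 + x ^ 2) by nra.
    field. split; [| lra]. intro H0.
    assert (a ^ 2 + x ^ 2 = a ^ 2 * (1 + x / a * (x / a))) by (field; lra). nra.
  - intros x _. apply (ex_derive_continuous (K := R_AbsRing) (V := R_NormedModule)).
    auto_derive. nra.
Qed.

Lemma is_RInt_dist_le (f g : R -> R) (a b If Ig eps : R) :
  a <= b -> is_RInt f a b If -> is_RInt g a b Ig ->
  (forall t, a <= t <= b -> Rabs (f t - g t) <= eps) -> Rabs (If - Ig) <= (b - a) * eps.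
Proof.
  intros Hab Hf Hg Hfg.
  pose proof (is_RInt_minus _ _ _ _ _ _ Hf Hg) as Hfg_int.
  replace (If - Ig) with (RInt (fun t => minus (f t) (g t)) a b)
    by exact (is_RInt_unique _ _ _ _ Hfg_int).
  apply abs_RInt_le_const; [exact Hab | eexists; exact Hfg_int | exact Hfg].
Qed.

Lemma dirichlet_mean_square_estimate n sigma : (1 <= n)%nat -> 0 < sigma < 1 ->
  Rabs (RInt (fun t => Cmod (dirichlet_sum n (sigma, t)) ^ 2) 0 1
          / Rpower (INR n) (2 * (1 - sigma))
        - / (1 - sigma) * atan (/ (1 - sigma)))
  <= (2 + 16 / sigma) * (4 + 16 / sigma) / ((1 - sigma) ^ 2 * Rpower (INR n) (1 - sigma)).
Proof.
  intros Hn Hs.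
  set (f := fun t => Cmod (dirichlet_sum n (sigma, t)) ^ 2).
  set (Q := Rpower (INR n) (2 * (1 - sigma))).
  assert (Hf : is_RInt (fun t => f t / Q) 0 1 (RInt f 0 1 / Q)).
  { assert (Hex : ex_RInt f 0 1).
    { apply (ex_RInt_continuous (V := R_CompleteNormedModule)).
      intros t _. apply continuous_Cmod_dirichlet_sum_sqr. }
    replace (RInt f 0 1 / Q) with (/ Q * RInt f 0 1) by (unfold Rdiv; ring).
    apply (is_RInt_ext (fun t => / Q * f t)).
    - intros; unfold Rdiv; apply Rmult_comm.
    - exact (is_RInt_scal _ _ _ _ _ (RInt_correct _ _ _ Hex)). }
  assert (Hg : is_RInt (fun t => / ((1 - sigma) ^ 2 + t ^ 2)) 0 1
                 (/ (1 - sigma) * atan (/ (1 - sigma)))).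
  { replace (/ (1 - sigma) * atan (/ (1 - sigma)))
      with (/ (1 - sigma) * (atan (1 / (1 - sigma)) - atan (0 / (1 - sigma))))
      by (unfold Rdiv; rewrite Rmult_0_l, atan_0, Rmult_1_l; ring).
    apply is_RInt_inv_sqr_add. lra. }
  match goal with |- _ <= ?eps => replace eps with ((1 - 0) * eps) by ring end.
  apply (is_RInt_dist_le _ _ 0 1 _ _ _ ltac:(lra) Hf Hg).
  intros t Ht. apply dirichlet_sum_sqr_pointwise; [exact Hn | exact Hs | exact Ht].
Qed.

Theorem corollary5p6 (sigma : R) (Hs1 : 1/2 < sigma) (Hs2 : sigma < 1) :
  exists (K : R) (N : nat), 0 < K /\
    forall n : nat, (N <= n)%nat ->
      Rabs (RInt (fun t => (Cmod (dirichlet_sum n (sigma, t))) ^ 2) 0 1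
              / Rpower (INR n) (2 * (1 - sigma))
            - / (1 - sigma) * atan (/ (1 - sigma)))
      <= K / Rpower (INR n) (2 * (1 - sigma) / 3).
Proof.
  set (a := 1 - sigma).
  assert (Ha2 : 0 < a ^ 2) by (apply pow_lt; unfold a; lra).
  set (C := (2 + 16 / sigma) * (4 + 16 / sigma)).
  assert (HC : 0 < C) by (assert (0 < 16 / sigma) by (apply Rdiv_lt_0_compat; lra); unfold C; nra).
  exists (C / a ^ 2), 1%nat.
  split; [apply Rdiv_lt_0_compat; lra |].
  intros n Hn.
  eapply Rle_trans; [apply dirichlet_mean_square_estimate; [exact Hn | lra] |].
  fold a C.
  assert (Hn1 : 1 <= INR n) by (apply (le_INR 1); lia).
  assert (Hpow : Rpower (INR n) (2 * a / 3) <= Rpower (INR n) a)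
    by (apply Rle_Rpower; unfold a; lra).
  assert (0 < Rpower (INR n) (2 * a / 3)) by apply exp_pos.
  unfold Rdiv. rewrite Rinv_mult, <- Rmult_assoc.
  apply Rmult_le_compat_l; [| apply Rinv_le_contravar; lra].
  apply Rmult_le_pos; [lra | left; apply Rinv_0_lt_compat; lra].
Qed.
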